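(* Let $A$ be an additive poset and $a,b\in A$. Then $a$ covers $b$ if and only if $a+b$ is an atom of $A$ and $a+b\le a$.
   Context: An additive poset is a pair $(A,\le)$ where $A$ is an abelian group and $\le$ is a partial order on $A$ such that for all $a,b,c\in A$: $(\ast)$ if $b\le a$ and $c\le a$ then $b+c\le a$; $(\ast\ast)$ if $a\le b$ and $a\le c$ then $a\le a+b+c$. (Then $0$ is the least element.) An element $a$ covers $b$ if $b<a$ (i.e. $b\le a$, $b\ne a$) and there is no $c$ with $b<c<a$. An atom of $A$ is an element covering $0$, i.e. a nonzero $a$ whose tail $A_a=\{x\in A:x\le a\}$ equals $\{0,a\}$. *)

From HB Require Import structures.
From mathcomp Require Import all_boot all_algebra.
Set Implicit Arguments. Unset Strict Implicit. Unset Printing Implicit Defensive.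
Import GRing.Theory.
Local Open Scope ring_scope.

Definition additive_poset (A : zmodType) (le : A -> A -> Prop) : Prop :=
  [/\ (forall a, le a a),
      (forall a b, le a b -> le b a -> a = b),
      (forall a b c, le a b -> le b c -> le a c),
      (forall a b c, le b a -> le c a -> le (b + c) a)
    & (forall a b c, le a b -> le a c -> le a (a + b + c))].

Definition lt_of (A : zmodType) (le : A -> A -> Prop) (b a : A) : Prop :=
  le b a /\ b <> a.

Definition covers (A : zmodType) (le : A -> A -> Prop) (a b : A) : Prop :=
  lt_of le b a /\ ~ (exists c, lt_of le b c /\ lt_of le c a).

Definition atom (A : zmodType) (le : A -> A -> Prop) (a : A) : Prop :=
  covers le a 0.

From mathcomp Require Import all_boot all_algebra.
Set Implicit Arguments. Unset Strict Implicit. Unset Printing Implicit Defensive.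
Import GRing.Theory.
Local Open Scope ring_scope.

(* Axiom ( * ) with b = c = a gives a + a <= a, and with b = a + a, c = a gives
   3a <= a, while ( ** ) gives a <= 3a; so 2a = 0 and every element is its own
   inverse.  Translation x |-> b + x is then an involution, and for b <= a it maps
   the interval [b, a] order-isomorphically onto [0, a + b]; covering pairs (a, b)
   thus correspond to atoms a + b. *)

Section AdditivePoset.

Variables (A : zmodType) (le : A -> A -> Prop).
Hypothesis hA : additive_poset le.

Let le_refl x : le x x. Proof. by case: hA. Qed.
Let le_anti {x y} : le x y -> le y x -> x = y.
Proof. by case: hA => _ anti _ _ _; exact: anti. Qed.
Let le_trans {x y z} : le x y -> le y z -> le x z.
Proof. by case: hA => _ _ trans _ _; exact: trans. Qed.
Let le_add {x y z} : le y x -> le z x -> le (y + z) x.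
Proof. by case: hA => _ _ _ add _; exact: add. Qed.
Let le_add3 {x y z} : le x y -> le x z -> le x (x + y + z).
Proof. by case: hA => _ _ _ _ add3; exact: add3. Qed.

Lemma addxx (x : A) : x + x = 0.
Proof.
have le_3x_x : le (x + x + x) x by apply: le_add => //; apply: le_add.
have := le_anti le_3x_x (le_add3 (le_refl x) (le_refl x)).
by move/eqP; rewrite -subr_eq0 addrK => /eqP.
Qed.

Lemma oppx (x : A) : - x = x.
Proof. by apply/eqP; rewrite -subr_eq0 -opprD addxx oppr0. Qed.

Lemma addxK (x y : A) : x + (x + y) = y.
Proof. by rewrite -{1}(oppx x) addKr. Qed.

Lemma le0x (x : A) : le 0 x.
Proof. by rewrite -(addxx x); apply: le_add. Qed.

Lemma le_addl (x y : A) : le (x + y) y <-> le x y.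
Proof.
split=> [le_xy_y | le_x_y]; last exact: le_add.
by have := le_add le_xy_y (le_refl y); rewrite -addrA addxx addr0.
Qed.

Lemma le_interval_add (a b x : A) :
  le b a -> (le b x /\ le x a) <-> le (b + x) (a + b).
Proof.
move=> le_b_a; split=> [[le_b_x le_x_a] | le_bx_ab].
  have le_bx_x : le (b + x) x by apply/le_addl.
  have := le_add3 le_bx_x (le_trans le_bx_x le_x_a).
  by rewrite -(addrA b) addxx addr0 (addrC b a).
have le_bx_a : le (b + x) a.
  by apply: le_trans le_bx_ab _; rewrite addrC; apply/le_addl.
split; last by have := le_add le_b_a le_bx_a; rewrite addxK.
have := le_add3 le_bx_ab le_bx_a.
by rewrite -addrA (addrC a b) -(addrA b) addxx addr0 (addrC (b + x)) addxK => /le_addl.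
Qed.

Lemma lt_interval_add {a b} (x : A) : le b a ->
  (lt_of le b x /\ lt_of le x a) <->
  (lt_of le 0 (b + x) /\ lt_of le (b + x) (a + b)).
Proof.
move=> le_b_a.
have eq_b : b = x <-> 0 = b + x by rewrite -(addxx b); split=> [-> | /addrI].
have eq_a : x = a <-> b + x = a + b by rewrite (addrC a); split=> [-> | /addrI].
split=> [[[le_b_x ne_bx] [le_x_a ne_xa]] | [[_ ne_0] [le_bx_ab ne_ab]]].
- have le_bx_ab : le (b + x) (a + b) by apply/le_interval_add.
  by do !split=> //; [apply: le0x | move/eq_b | move/eq_a].
- have [le_b_x le_x_a] : le b x /\ le x a by apply/le_interval_add.
  by do !split=> //; [move/eq_b | move/eq_a].
Qed.

Lemma covers_atom_add {a b : A} : le b a -> covers le a b <-> atom le (a + b).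
Proof.
move=> le_b_a.
have eq_ba : b = a <-> 0 = a + b.
  by rewrite -(addxx b) (addrC a); split=> [-> | /addrI].
split=> [[[_ ne_ba] no_mid] | [[_ ne_0] no_mid]].
- split; first by split; [apply: le0x | move/eq_ba].
  case=> c mid; apply: no_mid; exists (b + c).
  by apply/(lt_interval_add (b + c) le_b_a); rewrite addxK.
- split; first by split=> //; move/eq_ba.
  by case=> x /(lt_interval_add x le_b_a) mid; apply: no_mid; exists (b + x).
Qed.

End AdditivePoset.

Theorem lemma5p1 (A : zmodType) (le : A -> A -> Prop)
  (hA : additive_poset le) (a b : A) :
  covers le a b <-> (atom le (a + b) /\ le (a + b) a).
Proof.
have le_ab_a : le (a + b) a <-> le b a by rewrite addrC; apply: le_addl.
split=> [cov | [at_ab /le_ab_a le_b_a]].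
- have le_b_a : le b a by case: cov => [[]].
  by split; [apply/(covers_atom_add hA le_b_a) | apply/le_ab_a].
- exact/(covers_atom_add hA le_b_a).
Qed.
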